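(* For any simple undirected graph $G$, $$n_G(\mathcal{C}_4)=\frac14\sum_{st\in E}\sum_{u\in\Gamma(t)\setminus\{s\}}\big(|c(s,u)|-1\big),$$ where in the outer sum each edge $\{s,t\}$ appears once, with its endpoints named $s$ and $t$ in an arbitrary fixed way.
   Context: $\Gamma(x)$ is the neighbourhood of $x$ and $c(s,u)=\Gamma(s)\cap\Gamma(u)$. $\mathcal{C}_4$ is the cycle on 4 vertices and $n_G(\mathcal{C}_4)$ the number of subgraphs of $G$ isomorphic to it. *)

From mathcomp Require Import all_boot all_order all_algebra.
Set Implicit Arguments. Unset Strict Implicit. Unset Printing Implicit Defensive.

Definition simple_graph (T : finType) (e : rel T) : Prop :=
  symmetric e /\ irreflexive e.

Definition nbhd (T : finType) (e : rel T) (x : T) : {set T} := [set y | e x y].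

Definition common_nbhd (T : finType) (e : rel T) (s u : T) : {set T} :=
  nbhd e s :&: nbhd e u.

Definition edge_set (T : finType) (e : rel T) : {set {set T}} :=
  [set A : {set T} | [exists x, exists y, e x y && (A == [set x; y])]].

(* F (a set of edges of G) is the edge set of a subgraph of G isomorphic to C_4.
   (A C_4-subgraph has no isolated vertex, so it is determined by its edges.) *)
Definition is_C4_subgraph (T : finType) (e : rel T) (F : {set {set T}}) : bool :=
  (F \subset edge_set e) &&
  [exists a, exists b, exists c, exists d,
     [&& uniq [:: a; b; c; d] &
        F == [set [set a; b]; [set b; c]; [set c; d]; [set d; a]]]].

Definition nC4 (T : finType) (e : rel T) : nat :=
  #|[set F : {set {set T}} | is_C4_subgraph e F]|.

(* O is an orientation of the edges of G: each edge {s,t} is listed exactly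
   once, as an ordered pair (s,t) with an arbitrary choice of naming. *)
Definition orientation (T : finType) (e : rel T) (O : {set T * T}) : Prop :=
  (forall p, p \in O -> e p.1 p.2) /\
  (forall x y, e x y -> ((x, y) \in O) != ((y, x) \in O)).

From mathcomp Require Import all_boot all_order all_algebra.
From mathcomp Require Import zify ring.
Import GRing.Theory Num.Theory.
Set Implicit Arguments. Unset Strict Implicit. Unset Printing Implicit Defensive.

(* Count the closed walks (a, b, c, d) of G through four distinct vertices.
   Every 4-cycle of G is traced by exactly 8 of them (its dihedral
   relabellings), and the flip (a, b, c, d) |-> (b, a, d, c) shows that exactly
   half of them start with an arc of the orientation; so there are
   4 n_G(C_4) oriented walks.  On the other hand an oriented walk is an arc
   (s, t), a neighbour u <> s of t and a common neighbour w <> t of s and u;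
   as t itself lies in c(s, u), there are |c(s, u)| - 1 choices for w. *)

Notation quad T := (T * T * T * T)%type.

Definition quad_seq (T : Type) (q : quad T) : seq T :=
  let: (a, b, c, d) := q in [:: a; b; c; d].

Definition quad_map (S R : Type) (g : S -> R) (q : quad S) : quad R :=
  let: (a, b, c, d) := q in (g a, g b, g c, g d).

Definition quad_flip (T : Type) (q : quad T) : quad T :=
  let: (a, b, c, d) := q in (b, a, d, c).

Definition dihedral (T : Type) (q : quad T) : seq (quad T) :=
  let: (a, b, c, d) := q in
  [:: (a, b, c, d); (b, c, d, a); (c, d, a, b); (d, a, b, c);
      (b, a, d, c); (a, d, c, b); (d, c, b, a); (c, b, a, d)].

Definition cycle_edges (T : finType) (q : quad T) : {set {set T}} :=
  let: (a, b, c, d) := q in [set [set a; b]; [set b; c]; [set c; d]; [set d; a]].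

Definition ord_quad : quad 'I_4 :=
  (@Ordinal 4 0 isT, @Ordinal 4 1 isT, @Ordinal 4 2 isT, @Ordinal 4 3 isT).

Lemma quad_seq_map (S R : Type) (g : S -> R) (q : quad S) :
  quad_seq (quad_map g q) = map g (quad_seq q).
Proof. by case: q => [[[a b] c] d]. Qed.

Lemma quad_map_inj (S R : Type) (g : S -> R) : injective g -> injective (quad_map g).
Proof.
by move=> g_inj [[[a b] c] d] [[[a' b'] c'] d'] [/g_inj-> /g_inj-> /g_inj-> /g_inj->].
Qed.

Lemma quad_flipK (T : Type) : involutive (@quad_flip T).
Proof. by case=> [[[a b] c] d]. Qed.

Lemma set2_eqE (T : finType) (x y z w : T) :
  ([set x; y] == [set z; w]) = ((x == z) && (y == w)) || ((x == w) && (y == z)).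
Proof.
apply/eqP/idP => [E | /orP[] /andP[/eqP-> /eqP->] //]; last exact: setUC.
have := set21 x y; have := set22 x y; rewrite E !inE.
have := set21 z w; have := set22 z w; rewrite -E !inE.
by do 4 (case/orP=> /eqP ?); subst; rewrite ?eqxx ?orbT.
Qed.

Lemma cycle_edges_map (S R : finType) (g : S -> R) (q : quad S) :
  cycle_edges (quad_map g q) = [set g @: A | A : {set S} in cycle_edges q].
Proof. by case: q => [[[a b] c] d]; rewrite /= !imsetU !imset_set1 !imsetU !imset_set1. Qed.

Lemma cover_cycle_edges (T : finType) (q : quad T) :
  cover (cycle_edges q) = [set x in quad_seq q].
Proof.
case: q => [[[a b] c] d]; apply/setP => x; rewrite [RHS]inE.
apply/bigcupP/idP => [[A] | ].
  by rewrite !inE -!orbA => /or4P[] /eqP-> /set2P[]->; rewrite eqxx ?orbT.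
rewrite /= !inE => /or4P[] /eqP->;
  [exists [set a; b] | exists [set b; c] | exists [set c; d] | exists [set d; a]];
  by rewrite !inE eqxx ?orbT.
Qed.

Definition same_cycle (T : finType) (q q' : quad T) : bool :=
  uniq (quad_seq q) && (cycle_edges q == cycle_edges q').

Lemma same_cycle_map (S R : finType) (g : S -> R) (q q' : quad S) : injective g ->
  same_cycle (quad_map g q) (quad_map g q') = same_cycle q q'.
Proof.
move=> g_inj; rewrite /same_cycle quad_seq_map (map_inj_uniq g_inj) !cycle_edges_map.
by rewrite (inj_eq (imset_inj (imset_inj g_inj))).
Qed.

Lemma same_cycle_ord_quad (k : quad 'I_4) : same_cycle k ord_quad = (k \in dihedral ord_quad).
Proof.
case: k => [[[i j] k] l].
rewrite /same_cycle /= eqEsubset !subUset !sub1set !inE !set2_eqE.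
by case: i => [[|[|[|[|?]]]] ?] //; case: j => [[|[|[|[|?]]]] ?] //;
   case: k => [[|[|[|[|?]]]] ?] //; case: l => [[|[|[|[|?]]]] ?].
Qed.

Lemma same_cycle_vertices (T : finType) (q q' : quad T) :
  same_cycle q q' -> {subset quad_seq q <= quad_seq q'}.
Proof.
case/andP=> _ /eqP E v.
by have /setP/(_ v) := cover_cycle_edges q; rewrite E cover_cycle_edges !inE => <-.
Qed.

(* Relabelling the vertices of q0 by 'I_4 reduces the count to the finite
   check same_cycle_ord_quad. *)
Lemma card_same_cycle (T : finType) (q0 : quad T) : uniq (quad_seq q0) ->
  #|[set q | same_cycle q q0]| = 8.
Proof.
case: q0 => [[[a b] c] d] q0_uniq.
pose g (i : 'I_4) := nth a [:: a; b; c; d] i.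
have g_inj : injective g by move=> i j /eqP; rewrite nth_uniq // => /eqP/val_inj.
have g_onto v : v \in [:: a; b; c; d] -> exists i, v = g i.
  by move=> v_abcd; exists (Ordinal (etrans (index_mem v _) v_abcd)); rewrite /g nth_index.
have relabel k : same_cycle (quad_map g k) (a, b, c, d) = (k \in dihedral ord_quad).
  by rewrite -same_cycle_ord_quad -(same_cycle_map _ _ g_inj).
have -> : [set q | same_cycle q (a, b, c, d)] = [set quad_map g k | k in dihedral ord_quad].
  apply/setP => q; rewrite inE; apply/idP/imsetP => [q_cyc | [k]]; last by rewrite -relabel => ? ->.
  have [k def_q] : exists k, q = quad_map g k.
    case: q q_cyc => [[[x y] z] w] /same_cycle_vertices sub.
    have [i ->] : exists i, x = g i by apply/g_onto/sub; rewrite !inE eqxx.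
    have [j ->] : exists j, y = g j by apply/g_onto/sub; rewrite !inE eqxx ?orbT.
    have [k ->] : exists k, z = g k by apply/g_onto/sub; rewrite !inE eqxx ?orbT.
    have [l ->] : exists l, w = g l by apply/g_onto/sub; rewrite !inE eqxx ?orbT.
    by exists (i, j, k, l).
  by exists k; rewrite // -relabel -def_q.
by rewrite card_imset; [exact/card_uniqP | exact: quad_map_inj].
Qed.

Section C4Walks.

Variables (T : finType) (e : rel T).
Hypothesis e_sym : symmetric e.

Definition C4_walk (q : quad T) : bool :=
  let: (a, b, c, d) := q in uniq [:: a; b; c; d] && [&& e a b, e b c, e c d & e d a].

Definition first_arc (q : quad T) : T * T := let: (a, b, _, _) := q in (a, b).

Lemma edge_setE x y : ([set x; y] \in edge_set e) = e x y.
Proof.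
rewrite inE; apply/existsP/idP => [[x' /existsP[y' /andP[e_xy']]] | e_xy].
  by rewrite set2_eqE => /orP[] /andP[/eqP-> /eqP->]; rewrite // e_sym.
by exists x; apply/existsP; exists y; rewrite e_xy eqxx.
Qed.

Lemma C4_walkE q : C4_walk q = uniq (quad_seq q) && (cycle_edges q \subset edge_set e).
Proof. by case: q => [[[a b] c] d]; rewrite /= !subUset !sub1set !edge_setE -!andbA. Qed.

Lemma C4_subgraphsE : [set F | is_C4_subgraph e F] = @cycle_edges T @: [set q | C4_walk q].
Proof.
apply/setP => F; rewrite inE; apply/andP/imsetP => [[F_sub] | [q]].
  case/existsP=> a /existsP[b /existsP[c /existsP[d /andP[abcd_uniq /eqP def_F]]]].
  by exists (a, b, c, d) => //; rewrite inE C4_walkE abcd_uniq /= -def_F.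
rewrite inE C4_walkE => /andP[q_uniq q_sub] ->; split=> //.
case: q q_uniq {q_sub} => [[[a b] c] d] abcd_uniq.
by apply/existsP; exists a; apply/existsP; exists b; apply/existsP; exists c;
  apply/existsP; exists d; rewrite abcd_uniq eqxx.
Qed.

Lemma card_C4_walks : #|[set q | C4_walk q]| = 8 * nC4 e.
Proof.
rewrite /nC4 C4_subgraphsE -sum1_card (partition_big_imset (@cycle_edges T)) /=.
rewrite mulnC -sum_nat_const; apply: eq_bigr => _ /imsetP[q0 + ->].
rewrite inE C4_walkE => /andP[q0_uniq q0_sub].
rewrite -(card_same_cycle q0_uniq) -sum1_card; apply: eq_bigl => q.
rewrite !inE C4_walkE /same_cycle -andbA; case: eqP => [-> | _]; by rewrite ?q0_sub ?andbF.
Qed.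

Lemma C4_walk_flip q : C4_walk (quad_flip q) = C4_walk q.
Proof.
case: q => [[[a b] c] d].
have /perm_uniq flip_uniq : perm_eq [:: b; a; d; c] [:: a; b; c; d].
  by apply/permP => P /=; lia.
rewrite /= in flip_uniq *; rewrite flip_uniq (e_sym b a) (e_sym a d) (e_sym d c) (e_sym c b).
by case: (e b c) (e d a) => [] []; rewrite ?andbF.
Qed.

Variable O : {set T * T}.
Hypothesis O_orient : orientation e O.

Lemma orientation_flip x y : e x y -> ((y, x) \in O) = ((x, y) \notin O).
Proof. by move/(proj2 O_orient); case: ((x, y) \in O); case: ((y, x) \in O). Qed.

Lemma card_C4_walks_oriented :
  #|[set q | C4_walk q]| = 2 * #|[set q | C4_walk q && (first_arc q \in O)]|.
Proof.
set W := [set q | C4_walk q]; set WO := [set q | C4_walk q && (first_arc q \in O)].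
have flip_WO : @quad_flip T @: WO = W :\: WO.
  apply/setP => q; rewrite (can2_imset_pre _ (@quad_flipK T) (@quad_flipK T)) !inE.
  rewrite C4_walk_flip; case q_walk: (C4_walk q) => //=.
  case: q q_walk => [[[a b] c] d] /= /andP[_ /and4P[e_ab _ _ _]].
  by rewrite andbT orientation_flip.
rewrite -[LHS](cardsID WO) (setIidPr _); last by apply/subsetP => q; rewrite !inE => /andP[].
by rewrite -flip_WO card_imset ?addnn ?mul2n //; exact: inv_inj (@quad_flipK T).
Qed.

Hypothesis e_irr : irreflexive e.

Lemma sum_card_common_nbhd :
  \sum_(p in O) \sum_(u in nbhd e p.2 :\ p.1) #|common_nbhd e p.1 u :\ p.2| =
  #|[set q | C4_walk q && (first_arc q \in O)]|.
Proof.
under eq_bigr do under eq_bigr do rewrite -sum1_card.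
rewrite pair_big_dep /= pair_big_dep /= sum1dep_card.
apply: eq_card => -[[[s t] u] w]; rewrite !inE /=.
have edge_neq x y : e x y -> (x == y) = false.
  by move=> e_xy; apply: contraTF e_xy => /eqP->; rewrite e_irr.
case st_O: ((s, t) \in O); last by rewrite andbF.
have e_st := proj1 O_orient _ st_O.
rewrite e_st (e_sym w s).
case e_tu: (e t u); case e_sw: (e s w); case e_uw: (e u w); rewrite ?andbF //=.
rewrite !inE !andbT (edge_neq s t) // (edge_neq s w) // (edge_neq t u) // (edge_neq u w) //=.
by rewrite orbF andbT (eq_sym s u) (eq_sym t w).
Qed.

End C4Walks.

Local Open Scope ring_scope.

Theorem proposition11 (T : finType) (e : rel T) (O : {set T * T}) :
  simple_graph e -> orientation e O ->
  (nC4 e)%:R =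
    (1 / 4 : rat) *
    \sum_(p in O) \sum_(u in nbhd e p.2 :\ p.1)
       ((#|common_nbhd e p.1 u|)%:R - 1).
Proof.
move=> [e_sym e_irr] O_orient.
have oriented_walks : (4 * nC4 e)%N = #|[set q | C4_walk e q && (first_arc q \in O)]|.
  by have := card_C4_walks_oriented e_sym O_orient; rewrite card_C4_walks //; lia.
suff -> : \sum_(p in O) \sum_(u in nbhd e p.2 :\ p.1) ((#|common_nbhd e p.1 u|)%:R - 1) =
          (4 * nC4 e)%:R :> rat by rewrite natrM; field.
rewrite oriented_walks -sum_card_common_nbhd // natr_sum; apply: eq_bigr => p p_O.
rewrite natr_sum; apply: eq_bigr => u; rewrite !inE => /andP[_ e_tu].
have t_su : p.2 \in common_nbhd e p.1 u by rewrite !inE (proj1 O_orient _ p_O) e_sym.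
by rewrite (cardsD1 p.2) t_su add1n mulrSr addrK.
Qed.
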